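(* Let $\mathcal{X}$ be finite, $\mathcal{C}\subseteq\{\pm1\}^{\mathcal{X}}$ a concept class with concept matrix $W\in\mathbb{R}^{\mathcal{C}\times\mathcal{X}}$ and difference matrix $D\in\mathbb{R}^{\mathcal{C}^2\times\mathcal{X}}$, and let $\alpha\ge0$. Then $\gamma_2(D,\alpha)\le\gamma_2(W,\alpha)$. Conversely, $\gamma_2(W,\alpha)\le 2\gamma_2(D,\alpha/2)+1$, and if $\mathcal{C}$ is closed under negation (i.e. $c\in\mathcal{C}\Rightarrow -c\in\mathcal{C}$) then $\gamma_2(W,\alpha)\le\gamma_2(D,\alpha)$.
   Context: The concept matrix $W$ has entries $w_{c,x}=c(x)$. The difference matrix $D$ has rows indexed by ordered pairs $(c,c')\in\mathcal{C}^2$ and entries $d_{(c,c'),x}=\frac12(c(x)-c'(x))\in\{-1,0,1\}$. $\gamma_2(M)=\min\{\|R\|_{2\to\infty}\|A\|_{1\to2}:RA=M\}$, where $\|\cdot\|_{2\to\infty}$ is the maximum Euclidean row norm and $\|\cdot\|_{1\to2}$ the maximum Euclidean column norm; $\gamma_2(M,\alpha)=\min\{\gamma_2(\widetilde M):\max_{i,j}|\widetilde m_{ij}-m_{ij}|\le\alpha\}$. *)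

From HB Require Import structures.
From mathcomp Require Import all_boot all_order all_algebra.
From mathcomp Require Import boolp classical_sets reals.
Set Implicit Arguments. Unset Strict Implicit. Unset Printing Implicit Defensive.
Import Order.TTheory GRing.Theory Num.Theory.
Local Open Scope ring_scope.
Local Open Scope classical_set_scope.

Definition norm2inf {R : realType} {I : finType} {k : nat} (Rm : I -> 'I_k -> R) : R :=
  \big[Num.max/0]_(i : I) Num.sqrt (\sum_(l < k) Rm i l ^+ 2).

Definition norm12 {R : realType} {J : finType} {k : nat} (A : 'I_k -> J -> R) : R :=
  \big[Num.max/0]_(j : J) Num.sqrt (\sum_(l < k) A l j ^+ 2).

Definition gamma2 {R : realType} {I J : finType} (M : I -> J -> R) : R :=
  inf [set r : R | exists (k : nat) (Rm : I -> 'I_k -> R) (A : 'I_k -> J -> R),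
         (forall i j, \sum_(l < k) Rm i l * A l j = M i j) /\
         r = norm2inf Rm * norm12 A].

Definition gamma2_approx {R : realType} {I J : finType} (M : I -> J -> R) (alpha : R) : R :=
  inf [set r : R | exists M' : I -> J -> R,
         (forall i j, `|M' i j - M i j| <= alpha) /\ r = gamma2 M'].

(* A concept c : X -> {+1,-1} is encoded as a boolean function (true = +1). *)
Definition pm {R : realType} (b : bool) : R := if b then 1 else -1.

Definition concept_type {X : finType} (C : {set {ffun X -> bool}}) : finType :=
  {c : {ffun X -> bool} | c \in C}.

Definition concept_matrix {R : realType} {X : finType} (C : {set {ffun X -> bool}})
  : concept_type C -> X -> R := fun c x => pm (val c x).

Definition difference_matrix {R : realType} {X : finType} (C : {set {ffun X -> bool}})
  : (concept_type C * concept_type C)%type -> X -> R :=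
  fun cc x => (pm (val cc.1 x) - pm (val cc.2 x)) / 2.

Definition neg_concept {X : finType} (c : {ffun X -> bool}) : {ffun X -> bool} :=
  [ffun x => ~~ c x].

Arguments concept_matrix {R X} C.
Arguments difference_matrix {R X} C.

From HB Require Import structures.
From mathcomp Require Import all_boot all_order all_algebra.
From mathcomp Require Import boolp classical_sets reals.
From mathcomp Require Import ring lra.
Set Implicit Arguments. Unset Strict Implicit. Unset Printing Implicit Defensive.
Import Order.TTheory GRing.Theory Num.Theory.
Local Open Scope ring_scope.

(* gamma_2 is a seminorm on matrices that does not increase when the rows of a
   matrix are replaced by (halved) differences of rows or by a selection of
   rows, since both operations act on the left factor of a factorization
   without increasing its row norms.  Entrywise alpha-perturbations of W turn
   into alpha-perturbations of D = (W_c - W_c')/2, which gives the first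
   inequality.  Conversely, fixing a concept c0, W_c = 2 D_(c,c0) + c0, so
   W is obtained from the rows (c, c0) of D by doubling and adding a rank-one
   matrix of gamma_2 norm at most 1; and if C is closed under negation then
   W_c = D_(c,-c) is itself a selection of rows of D. *)

Section BigmaxSqrt.
Variables (R : rcfType) (I : finType) (f : I -> R).

Lemma bigmax_sqrt_ge0 : 0 <= \big[Num.max/0]_(i : I) Num.sqrt (f i).
Proof. by rewrite bigmax_ge_id. Qed.

Lemma bigmax_sqrt_le B : 0 <= B -> (forall i, f i <= B ^+ 2) ->
  \big[Num.max/0]_(i : I) Num.sqrt (f i) <= B.
Proof.
move=> B0 fB; apply: bigmax_le => // i _.
by rewrite -(ger0_norm B0) -sqrtr_sqr ler_sqrt ?sqr_ge0.
Qed.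

Lemma le_bigmax_sqrt_sqr i : 0 <= f i ->
  f i <= (\big[Num.max/0]_(i : I) Num.sqrt (f i)) ^+ 2.
Proof.
move=> fi0; rewrite -(sqr_sqrtr fi0) lerXn2r ?nnegrE ?sqrtr_ge0 ?bigmax_sqrt_ge0 //.
exact: (le_bigmax 0 (fun i => Num.sqrt (f i)) i).
Qed.

End BigmaxSqrt.

Lemma sumr_sqr_ge0 (R : realDomainType) k (g : 'I_k -> R) :
  0 <= \sum_(l < k) g l ^+ 2.
Proof. by apply: sumr_ge0 => l _; rewrite sqr_ge0. Qed.

Lemma sumr_sqr_le0 (R : realDomainType) k (g : 'I_k -> R) :
  \sum_(l < k) g l ^+ 2 <= 0 -> forall l, g l = 0.
Proof.
move=> g0 l; apply/eqP; rewrite -sqrf_eq0; apply/eqP.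
have sum0 : \sum_(l < k) g l ^+ 2 = 0 by apply/le_anti; rewrite g0 sumr_sqr_ge0.
by apply: (psumr_eq0P _ sum0) => // i _; rewrite sqr_ge0.
Qed.

Section Gamma2.
Variable R : realType.
Implicit Types (I J : finType) (k : nat).

Definition factorizes I J k (M : I -> J -> R) (Rm : I -> 'I_k -> R)
    (A : 'I_k -> J -> R) :=
  forall i j, \sum_(l < k) Rm i l * A l j = M i j.

Definition entry_close I J (M' M : I -> J -> R) (a : R) :=
  forall i j, `|M' i j - M i j| <= a.

Section Norms.
Variables (I J : finType) (k : nat) (Rm : I -> 'I_k -> R) (A : 'I_k -> J -> R).

Lemma norm2inf_ge0 : 0 <= norm2inf Rm.
Proof. exact: bigmax_sqrt_ge0. Qed.

Lemma norm12_ge0 : 0 <= norm12 A.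
Proof. exact: bigmax_sqrt_ge0. Qed.

Lemma row_sqnorm_le i : \sum_(l < k) Rm i l ^+ 2 <= norm2inf Rm ^+ 2.
Proof. by apply: le_bigmax_sqrt_sqr; exact: sumr_sqr_ge0. Qed.

Lemma col_sqnorm_le j : \sum_(l < k) A l j ^+ 2 <= norm12 A ^+ 2.
Proof. by apply: le_bigmax_sqrt_sqr; exact: sumr_sqr_ge0. Qed.

Lemma norm2inf_le B : 0 <= B -> (forall i, \sum_(l < k) Rm i l ^+ 2 <= B ^+ 2) ->
  norm2inf Rm <= B.
Proof. exact: bigmax_sqrt_le. Qed.

Lemma norm12_le B : 0 <= B -> (forall j, \sum_(l < k) A l j ^+ 2 <= B ^+ 2) ->
  norm12 A <= B.
Proof. exact: bigmax_sqrt_le. Qed.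

End Norms.

Section Factorizations.
Variables (I J : finType).
Implicit Types (M : I -> J -> R).

Lemma factorizes_id M :
  factorizes M (fun i (l : 'I_#|J|) => M i (enum_val l))
    (fun (l : 'I_#|J|) j => (enum_val l == j)%:R).
Proof.
move=> i j; rewrite -(big_enum_val (fun x => M i x * (x == j)%:R)) /=.
by rewrite (bigD1 j) //= eqxx mulr1 big1 ?addr0 // => x /negbTE ->; rewrite mulr0.
Qed.

Lemma factorizes_eq0 M k (Rm : I -> 'I_k -> R) (A : 'I_k -> J -> R) :
  factorizes M Rm A -> norm2inf Rm * norm12 A = 0 -> forall i j, M i j = 0.
Proof.
move=> MRA /eqP; rewrite mulf_eq0 => /orP[]/eqP cost0 i j; rewrite -MRA.
  have := row_sqnorm_le Rm i; rewrite cost0 expr0n /= => /sumr_sqr_le0 Ri0.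
  by apply: big1 => l _; rewrite Ri0 mul0r.
have := col_sqnorm_le A j; rewrite cost0 expr0n /= => /sumr_sqr_le0 Aj0.
by apply: big1 => l _; rewrite Aj0 mulr0.
Qed.

(* Rescaling the two factors by lambda and 1/lambda, with lambda^2 = a/r,
   makes both squared norms equal to the cost r * a. *)
Lemma balanced_factorization M k (Rm : I -> 'I_k -> R) (A : 'I_k -> J -> R) :
  factorizes M Rm A -> exists Rm' A', [/\ factorizes M Rm' A',
    forall i, \sum_(l < k) Rm' i l ^+ 2 <= norm2inf Rm * norm12 A &
    forall j, \sum_(l < k) A' l j ^+ 2 <= norm2inf Rm * norm12 A].
Proof.
move=> MRA; set r := norm2inf Rm; set a := norm12 A.
have [cost0|cost_neq0] := eqVneq (r * a) 0.
  exists (fun _ _ => 0), (fun _ _ => 0); split=> [i j||];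
    rewrite ?cost0; last 2 first.
  - by move=> i; rewrite big1 // => l _; rewrite expr0n.
  - by move=> j; rewrite big1 // => l _; rewrite expr0n.
  by rewrite (factorizes_eq0 MRA cost0) big1 // => l _; rewrite mul0r.
have r_gt0 : 0 < r.
  by rewrite lt_def norm2inf_ge0 andbT; apply: contraNneq cost_neq0 => ->; rewrite mul0r.
have a_gt0 : 0 < a.
  by rewrite lt_def norm12_ge0 andbT; apply: contraNneq cost_neq0 => ->; rewrite mulr0.
pose lam := Num.sqrt (a / r).
have lam2 : lam ^+ 2 = a / r by rewrite sqr_sqrtr // ltW // divr_gt0.
have lam_neq0 : lam != 0 by rewrite gt_eqF // sqrtr_gt0 divr_gt0.
exists (fun i l => lam * Rm i l), (fun l j => lam^-1 * A l j); split.
- move=> i j; rewrite -MRA; apply: eq_bigr => l _.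
  by rewrite mulrACA divff // mul1r.
- move=> i; under eq_bigr do rewrite exprMn.
  rewrite -mulr_sumr lam2 (_ : r * a = a / r * r ^+ 2); last by field; rewrite gt_eqF.
  by apply: ler_wpM2l; [rewrite divr_ge0 ?ltW | exact: row_sqnorm_le].
- move=> j; under eq_bigr do rewrite exprMn.
  rewrite -mulr_sumr exprVn lam2 (_ : r * a = (a / r)^-1 * a ^+ 2); last first.
    by field; rewrite !gt_eqF.
  by apply: ler_wpM2l; [rewrite invr_ge0 divr_ge0 ?ltW | exact: col_sqnorm_le].
Qed.

Lemma gamma2_le M k (Rm : I -> 'I_k -> R) (A : 'I_k -> J -> R) :
  factorizes M Rm A -> gamma2 M <= norm2inf Rm * norm12 A.
Proof.
move=> MRA; apply: ge_inf; last by exists k, Rm, A.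
by exists 0 => _ [k' [Rm' [A' [_ ->]]]]; rewrite mulr_ge0 ?norm2inf_ge0 ?norm12_ge0.
Qed.

Lemma gamma2_ge_lb M y :
  (forall k (Rm : I -> 'I_k -> R) (A : 'I_k -> J -> R),
     factorizes M Rm A -> y <= norm2inf Rm * norm12 A) ->
  y <= gamma2 M.
Proof.
move=> lbM; apply: lb_le_inf.
  by do 4 eexists; split; first exact: factorizes_id.
by move=> _ [k [Rm [A [MRA ->]]]]; exact: lbM.
Qed.

Lemma gamma2_ge0 M : 0 <= gamma2 M.
Proof.
by apply: gamma2_ge_lb => k Rm A _; rewrite mulr_ge0 ?norm2inf_ge0 ?norm12_ge0.
Qed.

Lemma gamma2_le_sqnorms M k (Rm : I -> 'I_k -> R) (A : 'I_k -> J -> R) B :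
  factorizes M Rm A -> 0 <= B ->
  (forall i, \sum_(l < k) Rm i l ^+ 2 <= B) ->
  (forall j, \sum_(l < k) A l j ^+ 2 <= B) ->
  gamma2 M <= B.
Proof.
move=> MRA B0 RB AB; apply: le_trans (gamma2_le MRA) _.
have sqrtB2 : Num.sqrt B ^+ 2 = B by rewrite sqr_sqrtr.
rewrite -sqrtB2 expr2 ler_pM ?norm2inf_ge0 ?norm12_ge0 //.
  by apply: norm2inf_le; rewrite ?sqrtr_ge0 // sqrtB2.
by apply: norm12_le; rewrite ?sqrtr_ge0 // sqrtB2.
Qed.

Definition concat_cols k1 k2 (R1 : I -> 'I_k1 -> R) (R2 : I -> 'I_k2 -> R) :
    I -> 'I_(k1 + k2) -> R :=
  fun i l => match split l with inl l1 => R1 i l1 | inr l2 => R2 i l2 end.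

Definition concat_rows k1 k2 (A1 : 'I_k1 -> J -> R) (A2 : 'I_k2 -> J -> R) :
    'I_(k1 + k2) -> J -> R :=
  fun l j => match split l with inl l1 => A1 l1 j | inr l2 => A2 l2 j end.

Lemma sum_concat k1 k2 (F : 'I_(k1 + k2) -> R) :
  \sum_(l < k1 + k2) F l =
  \sum_(l < k1) F (unsplit (inl l)) + \sum_(l < k2) F (unsplit (inr l)).
Proof. exact: big_split_ord. Qed.

Lemma gamma2D_le M1 M2 :
  gamma2 (fun i j => M1 i j + M2 i j) <= gamma2 M1 + gamma2 M2.
Proof.
suff cost_bound k1 (R1 : I -> 'I_k1 -> R) (A1 : 'I_k1 -> J -> R)
    k2 (R2 : I -> 'I_k2 -> R) (A2 : 'I_k2 -> J -> R) :
    factorizes M1 R1 A1 -> factorizes M2 R2 A2 ->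
    gamma2 (fun i j => M1 i j + M2 i j) <=
    norm2inf R1 * norm12 A1 + norm2inf R2 * norm12 A2.
  rewrite -lerBlDr; apply: gamma2_ge_lb => k1 R1 A1 MRA1.
  rewrite lerBlDr addrC -lerBlDr; apply: gamma2_ge_lb => k2 R2 A2 MRA2.
  by rewrite lerBlDr addrC; exact: cost_bound.
move=> /balanced_factorization[R1' [A1' [MRA1 R1B A1B]]].
move=> /balanced_factorization[R2' [A2' [MRA2 R2B A2B]]].
apply: (@gamma2_le_sqnorms _ _ (concat_cols R1' R2') (concat_rows A1' A2')).
- move=> i j; rewrite sum_concat /concat_cols /concat_rows.
  under eq_bigr do rewrite unsplitK; under [X in _ + X]eq_bigr do rewrite unsplitK.
  by rewrite MRA1 MRA2.
- by rewrite addr_ge0 // mulr_ge0 ?norm2inf_ge0 ?norm12_ge0.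
- move=> i; rewrite sum_concat /concat_cols.
  under eq_bigr do rewrite unsplitK; under [X in _ + X]eq_bigr do rewrite unsplitK.
  exact: lerD.
- move=> j; rewrite sum_concat /concat_rows.
  under eq_bigr do rewrite unsplitK; under [X in _ + X]eq_bigr do rewrite unsplitK.
  exact: lerD.
Qed.

Lemma gamma2_const_rows_le (w : J -> R) : (forall j, `|w j| <= 1) ->
  gamma2 (fun (_ : I) j => w j) <= 1.
Proof.
move=> w1; apply: (@gamma2_le_sqnorms _ 1 (fun _ _ => 1) (fun _ j => w j)) => //.
- by move=> i j; rewrite big_ord1 mul1r.
- by move=> i; rewrite big_ord1 expr1n.
- move=> j; rewrite big_ord1 -real_normK ?num_real // -(expr1n R 2).
  by rewrite lerXn2r ?nnegrE.
Qed.

End Factorizations.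

Section RowOperations.
Variables (I J : finType).
Implicit Types (M : I -> J -> R).

Lemma gamma2_reindex_rows_le I' (f : I' -> I) M : gamma2 (fun i => M (f i)) <= gamma2 M.
Proof.
apply: gamma2_ge_lb => k Rm A MRA.
have MRAf : factorizes (fun i => M (f i)) (fun i => Rm (f i)) A by move=> i; exact: MRA.
apply: le_trans (gamma2_le MRAf) _; apply: ler_wpM2r; first exact: norm12_ge0.
by apply: norm2inf_le => [|i]; [exact: norm2inf_ge0 | exact: row_sqnorm_le].
Qed.

Definition half_diff_rows M : (I * I)%type -> J -> R :=
  fun p j => (M p.1 j - M p.2 j) / 2.

Lemma gamma2_half_diff_rows_le M : gamma2 (half_diff_rows M) <= gamma2 M.
Proof.
apply: gamma2_ge_lb => k Rm A MRA.
pose Rd (p : (I * I)%type) l := (Rm p.1 l - Rm p.2 l) / 2.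
have MRAd : factorizes (half_diff_rows M) Rd A.
  by move=> p j; rewrite /half_diff_rows -!MRA -sumrB mulr_suml;
    apply: eq_bigr => l _; rewrite /Rd; ring.
apply: le_trans (gamma2_le MRAd) _; apply: ler_wpM2r; first exact: norm12_ge0.
apply: norm2inf_le => [|p]; first exact: norm2inf_ge0.
apply: le_trans (_ : (\sum_(l < k) Rm p.1 l ^+ 2 + \sum_(l < k) Rm p.2 l ^+ 2) / 2 <= _).
  rewrite -big_split /= mulr_suml; apply: ler_sum => l _; rewrite /Rd.
  have := sqr_ge0 (Rm p.1 l + Rm p.2 l); rewrite !expr2 => ?; nra.
rewrite ler_pdivrMr // mulr_natr mulr2n.
by apply: lerD; exact: row_sqnorm_le.
Qed.

Lemma half_diff_rows_close M' M a : entry_close M' M a ->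
  entry_close (half_diff_rows M') (half_diff_rows M) a.
Proof.
move=> M'M [i i'] j; rewrite /half_diff_rows /=.
have -> : (M' i j - M' i' j) / 2 - (M i j - M i' j) / 2 =
          ((M' i j - M i j) - (M' i' j - M i' j)) / 2 by field.
rewrite normrM [`|2^-1|]ger0_norm ?invr_ge0 //.
have := M'M i j; have := M'M i' j; have := ler_normB (M' i j - M i j) (M' i' j - M i' j).
lra.
Qed.

End RowOperations.

Section Approx.
Variables (I J : finType).

Lemma gamma2_approx_le (M M' : I -> J -> R) a : entry_close M' M a ->
  gamma2_approx M a <= gamma2 M'.
Proof.
move=> M'M; apply: ge_inf; last by exists M'.
by exists 0 => _ [M'' [_ ->]]; exact: gamma2_ge0.
Qed.

Lemma gamma2_approx_ge_lb (M : I -> J -> R) a y : 0 <= a ->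
  (forall M', entry_close M' M a -> y <= gamma2 M') -> y <= gamma2_approx M a.
Proof.
move=> a0 lbM; apply: lb_le_inf.
  by exists (gamma2 M), M; split => // i j; rewrite subrr normr0.
by move=> _ [M' [M'M ->]]; exact: lbM.
Qed.

End Approx.

Lemma gamma2_approx_transfer I J I' J' (M : I -> J -> R) (N : I' -> J' -> R) a b c d :
  0 <= a -> 0 < c ->
  (forall M', entry_close M' M a ->
     exists2 N', entry_close N' N b & gamma2 N' <= c * gamma2 M' + d) ->
  gamma2_approx N b <= c * gamma2_approx M a + d.
Proof.
move=> a0 c_gt0 transfer; rewrite -lerBlDr mulrC -ler_pdivrMr //.
apply: gamma2_approx_ge_lb => // M' /transfer[N' N'N gN'].
rewrite ler_pdivrMr // mulrC lerBlDr.
exact: le_trans (gamma2_approx_le N'N) gN'.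
Qed.

End Gamma2.

Section Concepts.
Variables (R : realType) (X : finType) (C : {set {ffun X -> bool}}).

Let W := concept_matrix (R := R) C.
Let D := difference_matrix (R := R) C.

Lemma gamma2_approx_difference_le_concept alpha : 0 <= alpha ->
  gamma2_approx D alpha <= gamma2_approx W alpha.
Proof.
move=> alpha0; rewrite -[Y in _ <= Y]addr0 -[Y in _ <= Y + _]mul1r.
apply: gamma2_approx_transfer => // W' W'W.
exists (half_diff_rows W'); first exact: (half_diff_rows_close (M := W) W'W).
by rewrite mul1r addr0; exact: gamma2_half_diff_rows_le.
Qed.

Lemma gamma2_approx_concept_le_difference alpha : 0 <= alpha ->
  gamma2_approx W alpha <= 2 * gamma2_approx D (alpha / 2) + 1.
Proof.
move=> alpha0; apply: gamma2_approx_transfer; rewrite ?divr_ge0 // => D' D'D.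
have [c0 _ | noC] := pickP (fun _ : concept_type C => true); last first.
  exists (fun _ _ => 0); first by move=> c; have := noC c.
  apply: le_trans (_ : 1 <= _); last by rewrite lerDr mulr_ge0 ?gamma2_ge0.
  by apply: gamma2_const_rows_le => x; rewrite normr0.
pose D0 c x := D' (c, c0) x.
pose w x : R := pm (val c0 x).
exists (fun c x => D0 c x + D0 c x + w x).
  move=> c x; rewrite (_ : _ - _ = 2 * (D' (c, c0) x - D (c, c0) x)); last first.
    by rewrite /D0 /w /W /D /difference_matrix /concept_matrix /=; field.
  by rewrite normrM ger0_norm // mulrC -ler_pdivlMr //; exact: D'D.
apply: le_trans (gamma2D_le _ _) _.
rewrite mulr_natl mulr2n lerD //; last first.
  by apply: gamma2_const_rows_le => x; rewrite /w /pm; case: (val c0 x);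
    rewrite ?normrN normr1.
apply: le_trans (gamma2D_le _ _) _.
by apply: lerD; exact: (gamma2_reindex_rows_le (fun c => (c, c0))).
Qed.

Lemma gamma2_approx_concept_le_difference_neg_closed alpha : 0 <= alpha ->
  (forall c, c \in C -> neg_concept c \in C) ->
  gamma2_approx W alpha <= gamma2_approx D alpha.
Proof.
move=> alpha0 negC; rewrite -[Y in _ <= Y]addr0 -[Y in _ <= Y + _]mul1r.
apply: gamma2_approx_transfer => // D' D'D.
pose ng (c : concept_type C) : concept_type C :=
  exist _ (neg_concept (val c)) (negC _ (valP c)).
have DW c x : D (c, ng c) x = W c x.
  rewrite /D /W /difference_matrix /concept_matrix /= /neg_concept ffunE.
  by case: (val c x); rewrite /pm /=; field.
exists (fun c => D' (c, ng c)); first by move=> c x; rewrite -DW; exact: D'D.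
by rewrite mul1r addr0; exact: (gamma2_reindex_rows_le (fun c => (c, ng c))).
Qed.

End Concepts.

Theorem lemma3p3 (R : realType) (X : finType) (C : {set {ffun X -> bool}}) (alpha : R) :
  0 <= alpha ->
  gamma2_approx (difference_matrix C) alpha <= gamma2_approx (concept_matrix C) alpha /\
  gamma2_approx (concept_matrix C) alpha
    <= 2 * gamma2_approx (difference_matrix C) (alpha / 2) + 1 /\
  ((forall c, c \in C -> neg_concept c \in C) ->
   gamma2_approx (concept_matrix C) alpha <= gamma2_approx (difference_matrix C) alpha).
Proof.
move=> alpha0; split; first exact: gamma2_approx_difference_le_concept.
split; first exact: gamma2_approx_concept_le_difference.
exact: gamma2_approx_concept_le_difference_neg_closed.
Qed.
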